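(* Let $A=(\Sigma,q,N,\delta)$ be a well-formed LQCA, and let $A'=(\Sigma,q,N,\delta')$ where $\delta'(w)=\delta(w)/\|\delta(w)\|$ for all $w\in\Sigma^{|N|}$. Then $U_{A'}=U_A$, and $\|\delta'(w)\|=1$ for all $w$.
   Context: A linear quantum cellular automaton (LQCA) is a tuple $A=(\Sigma,q,N,\delta)$ where $\Sigma$ is a finite nonempty set of states, $N=(a_1,\dots,a_r)$ is a strictly increasing sequence of integers, $\delta:\Sigma^r\to\mathbb C^\Sigma$ satisfies $\|\delta(w)\|>0$ for all $w$ (with the standard norm on $\mathbb C^\Sigma$), and $q\in\Sigma$ satisfies $[\delta(q,\dots,q)](x)=1$ if $x=q$ and $0$ otherwise. A configuration is a map $c:\mathbb Z\to\Sigma$ with $c_i\ne q$ for only finitely many $i$; $\mathcal C_A$ is the set of configurations. With $c_{i+N}=(c_{i+a_1},\dots,c_{i+a_r})$, the time evolution operator is $U_A(d,c)=\prod_{i\in\mathbb Z}[\delta(c_{i+N})](d_i)$ for $c,d\in\mathcal C_A$, viewed as a linear operator on $\ell_2(\mathcal C_A)$. $A$ is well-formed if $U_A$ preserves the $\ell_2$ norm. *)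

From HB Require Import structures.
From mathcomp Require Import all_boot all_order all_algebra.
From mathcomp Require Import all_classical all_reals.
From mathcomp Require Import ereal esum.
From mathcomp Require Import complex.

Set Implicit Arguments.
Unset Strict Implicit.
Unset Printing Implicit Defensive.
Import Order.TTheory GRing.Theory Num.Theory ComplexField.

Local Open Scope classical_set_scope.
Local Open Scope ring_scope.

Section LQCA.
Variable R : realType.
Local Notation C := (R[i]).

Definition vnorm (Sigma : finType) (v : Sigma -> C) : R :=
  Num.sqrt (\sum_(x : Sigma) (ComplexField.Normc.normc (v x)) ^+ 2).

Definition is_LQCA (Sigma : finType) (q : Sigma) (r : nat) (N : r.-tuple int)
    (delta : r.-tuple Sigma -> Sigma -> C) : Prop :=
  [/\ sorted (fun a b : int => a < b) N,
      (forall w, 0 < vnorm (delta w)) &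
      (forall x, delta [tuple of nseq r q] x = if x == q then 1 else 0)].

Definition is_config (Sigma : finType) (q : Sigma) (c : int -> Sigma) : Prop :=
  finite_set [set i | c i != q].

Definition configs (Sigma : finType) (q : Sigma) : set (int -> Sigma) :=
  [set c | is_config q c].

Definition nbhd (Sigma : finType) (r : nat) (N : r.-tuple int)
    (c : int -> Sigma) (i : int) : r.-tuple Sigma :=
  map_tuple (fun a => c (i + a)) N.

(* U_A(d, c) = prod_{i in Z} delta(c_{i+N})(d_i); for configurations c, d all but
   finitely many factors equal 1, and the product is the (finitely supported)
   product over all i in Z. *)
Definition U_A (Sigma : finType) (r : nat) (N : r.-tuple int)
    (delta : r.-tuple Sigma -> Sigma -> C) (d c : int -> Sigma) : C :=
  \big[*%R/1]_(i \in [set: int]) delta (nbhd N c i) (d i).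

Definition fin_vector (Sigma : finType) (q : Sigma) (psi : (int -> Sigma) -> C)
  : Prop :=
  finite_set [set c | psi c != 0] /\ [set c | psi c != 0] `<=` configs q.

Definition U_apply (Sigma : finType) (q : Sigma) (r : nat) (N : r.-tuple int)
    (delta : r.-tuple Sigma -> Sigma -> C) (psi : (int -> Sigma) -> C)
    (d : int -> Sigma) : C :=
  \sum_(c \in configs q) U_A N delta d c * psi c.

Definition l2sqnorm (Sigma : finType) (q : Sigma) (psi : (int -> Sigma) -> C)
  : \bar R :=
  \esum_(c in configs q) ((ComplexField.Normc.normc (psi c)) ^+ 2)%:E.

(* well-formed: U_A preserves the l2 norm (tested on the dense subspace of
   finitely supported vectors, on which U_A is first defined) *)
Definition well_formed (Sigma : finType) (q : Sigma) (r : nat) (N : r.-tuple int)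
    (delta : r.-tuple Sigma -> Sigma -> C) : Prop :=
  forall psi, fin_vector q psi ->
    l2sqnorm q (U_apply q N delta psi) = l2sqnorm q psi.

Definition normalize_delta (Sigma : finType) (r : nat)
    (delta : r.-tuple Sigma -> Sigma -> C) : r.-tuple Sigma -> Sigma -> C :=
  fun w x => delta w x / (vnorm (delta w))%:C%C.

End LQCA.

From mathcomp Require Import all_boot all_order all_algebra.
From mathcomp Require Import all_classical all_reals.
From mathcomp Require Import ereal esum.
From mathcomp Require Import complex.
From mathcomp Require Import finmap.
Import Order.TTheory GRing.Theory Num.Theory ComplexField.

Set Implicit Arguments.
Unset Strict Implicit.
Unset Printing Implicit Defensive.

Local Open Scope classical_set_scope.
Local Open Scope ring_scope.

(* Applying well-formedness to the basis vector of a configuration [c] gives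
   [1 = \sum_d |U_A(d, c)|^2].  Only the finitely many cells whose neighbourhood
   in [c] is not quiescent matter, and over them the sum factorises into
   [\prod_i ||delta(c_{i+N})||^2].  Hence [\prod_i ||delta(c_{i+N})|| = 1], and
   [U_A'(d, c) = U_A(d, c) / \prod_i ||delta(c_{i+N})|| = U_A(d, c)]. *)

Lemma esum_widen (R : realType) (T : choiceType) (P D : set T) (a : T -> \bar R) :
  P `<=` D -> (forall i, D i -> ~ P i -> a i = 0%E) ->
  \esum_(i in P) a i = \esum_(i in D) a i.
Proof.
move=> PD a0; rewrite esum_mkcond [RHS]esum_mkcond; apply: eq_esum => i _.
have [iP|iNP] := boolP (i \in P); first by rewrite ifT //; apply/mem_set/PD/set_mem.
by case: ifP => // /set_mem Di; rewrite a0 // => /mem_set; apply/negP.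
Qed.

Lemma fsbig_setT_finType (R : Type) (idx : R) (op : Monoid.com_law idx)
    (T : finType) (F : T -> R) :
  \big[op/idx]_(x \in [set: T]) F x = \big[op/idx]_(x : T) F x.
Proof.
rewrite (@bigfs _ _ _ _ _ predT _ (index_enum_uniq T)) => [|i _];
  last by rewrite mem_index_enum.
by apply: eq_fsbigl; apply/seteqP; split.
Qed.

Section Vnorm.
Variables (R : realType) (Sigma : finType).
Local Notation normc := (@Normc.normc R).

Lemma normc_real (x : R) : 0 <= x -> normc x%:C%C = x.
Proof. by move=> x0; rewrite /Normc.normc /= expr0n /= addr0 sqrtr_sqr ger0_norm. Qed.

Lemma sqr_vnorm (v : Sigma -> R[i]) : vnorm v ^+ 2 = \sum_x normc (v x) ^+ 2.
Proof. by rewrite /vnorm sqr_sqrtr // sumr_ge0 // => x _; exact: sqr_ge0. Qed.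

Lemma vnorm_normalized (v : Sigma -> R[i]) :
  0 < vnorm v -> vnorm (fun x => v x / (vnorm v)%:C%C) = 1.
Proof.
move=> v_gt0; rewrite {1}/vnorm.
under eq_bigr do rewrite Normc.normcM Normc.normcV normc_real ?(ltW v_gt0) // exprMn.
by rewrite -mulr_suml -sqr_vnorm exprVn divff ?sqrtr1 // expf_neq0 // gt_eqF.
Qed.

Lemma vnorm_unit_vector (q : Sigma) :
  vnorm (fun x => if x == q then 1 else 0 : R[i]) = 1.
Proof.
rewrite /vnorm (bigD1 q) //= eqxx big1 ?addr0 ?Normc.normc1 ?expr1n ?sqrtr1 //.
by move=> x xq; rewrite ifN // Normc.normc0 expr0n.
Qed.

End Vnorm.

Section Neighbourhoods.
Variables (Sigma : finType) (q : Sigma) (r : nat) (N : r.-tuple int).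
Local Notation quiescent := [tuple of nseq r q].

Lemma nbhd_quiescent (c : int -> Sigma) i :
  (forall a, a \in (N : seq int) -> c (i + a) = q) -> nbhd N c i = quiescent.
Proof.
move=> cq; apply: val_inj; rewrite /= /nbhd /=.
rewrite -[X in nseq X](size_tuple N) -(size_map (fun a => c (i + a))).
by apply/all_pred1P/allP => _ /mapP[a aN ->]; rewrite /= cq.
Qed.

Definition active_cells (c : int -> Sigma) := [set i | nbhd N c i != quiescent].

Lemma active_cells_finite c : is_config q c -> finite_set (active_cells c).
Proof.
move=> c_fin.
apply: (sub_finite_set (B := \bigcup_(a in [set` (N : seq int)])
                              ((fun j => j - a) @` [set j | c j != q]))); last first.
  by apply: bigcup_finite => // a _; exact: finite_image.
move=> i /= /negP iNq.
have [[a aN cia]|] := pselect (exists2 a, a \in (N : seq int) & c (i + a) != q).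
  by exists a => //; exists (i + a) => //; rewrite addrK.
move=> allq; exfalso; apply: iNq; apply/eqP/nbhd_quiescent => a aN.
by apply/eqP/negPn/negP => ciaNq; apply: allq; exists a.
Qed.

Lemma mem_active_cells c i : is_config q c ->
  active_cells c i -> i \in fset_set (active_cells c).
Proof. by move=> c_fin act; rewrite in_fset_set ?mem_set //; exact: active_cells_finite. Qed.

Lemma notin_active_cells c : is_config q c -> forall i,
  i \notin fset_set (active_cells c) -> nbhd N c i = quiescent.
Proof.
by move=> c_fin i iNA; apply/eqP/negPn/negP => /(mem_active_cells c_fin); apply/negP.
Qed.

Definition config_of_ffun (A : {fset int}) (f : {ffun A -> Sigma}) : int -> Sigma :=
  fun j => if insub j is Some k then f k else q.

Lemma config_of_ffun_val (A : {fset int}) (f : {ffun A -> Sigma}) (k : A) :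
  config_of_ffun f (val k) = f k.
Proof. by rewrite /config_of_ffun valK. Qed.

Lemma config_of_ffun_out (A : {fset int}) (f : {ffun A -> Sigma}) j :
  j \notin A -> config_of_ffun f j = q.
Proof. by move=> jA; rewrite /config_of_ffun insubN. Qed.

Lemma config_of_ffun_inj (A : {fset int}) : injective (@config_of_ffun A).
Proof. by move=> f g fg; apply/ffunP => k; rewrite -!config_of_ffun_val fg. Qed.

Lemma config_of_ffun_is_config (A : {fset int}) (f : {ffun A -> Sigma}) :
  is_config q (config_of_ffun f).
Proof.
apply: (sub_finite_set (B := [set` A])); last exact: finite_fset.
by move=> j /=; apply: contraNT => /config_of_ffun_out ->.
Qed.

Lemma config_of_ffun_restrict (A : {fset int}) (d : int -> Sigma) :
  (forall j, j \notin A -> d j = q) -> config_of_ffun [ffun k : A => d (val k)] = d.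
Proof.
move=> dq; apply/funext => j; rewrite /config_of_ffun.
by case: insubP => [k _ <-|/dq //]; rewrite ffunE.
Qed.

Definition relevant_cells (c d : int -> Sigma) :=
  fset_set (active_cells c `|` [set i | d i != q]).

Lemma relevant_cellsP c d i : is_config q c -> is_config q d ->
  reflect (active_cells c i \/ d i != q) (i \in relevant_cells c d).
Proof.
move=> c_fin d_fin; rewrite in_fset_set; last first.
  by rewrite finite_setU; split; [exact: active_cells_finite | exact: d_fin].
by apply: (iffP idP) => [/set_mem|/mem_set].
Qed.

Lemma notin_relevant_cells c d i : is_config q c -> is_config q d ->
  i \notin relevant_cells c d -> nbhd N c i = quiescent /\ d i = q.
Proof.
move=> c_fin d_fin /(relevant_cellsP _ c_fin d_fin) iNrel.
by split; apply/eqP/negPn/negP => ?; apply: iNrel; [left|right].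
Qed.

End Neighbourhoods.

Section TimeEvolution.
Variables (R : realType) (Sigma : finType) (q : Sigma) (r : nat) (N : r.-tuple int).
Variable delta : r.-tuple Sigma -> Sigma -> R[i].
Local Notation quiescent := [tuple of nseq r q].
Local Notation normc := (@Normc.normc R).
Hypothesis delta_quiescent : forall x, delta quiescent x = if x == q then 1 else 0.

Lemma U_A_prodE (B : {fset int}) c d :
  (forall i, i \notin B -> nbhd N c i = quiescent /\ d i = q) ->
  U_A N delta d c = \prod_(i <- B) delta (nbhd N c i) (d i).
Proof.
by move=> Bq; rewrite /U_A (fsbigTE B) // => i /Bq[-> ->]; rewrite delta_quiescent eqxx.
Qed.

Lemma U_A_config c d : is_config q c -> is_config q d ->
  U_A N delta d c = \prod_(i <- relevant_cells q N c d) delta (nbhd N c i) (d i).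
Proof. by move=> c_fin d_fin; apply: U_A_prodE => i; apply: notin_relevant_cells. Qed.

Lemma U_A_eq0 c d j : is_config q c -> is_config q d ->
  ~ active_cells q N c j -> d j != q -> U_A N delta d c = 0.
Proof.
move=> c_fin d_fin jNact djNq; rewrite U_A_config //.
have j_rel : j \in relevant_cells q N c d by apply/relevant_cellsP => //; right.
have cj : nbhd N c j = quiescent by apply/eqP/negPn/negP.
by rewrite (bigD1_seq j) ?fset_uniq //= cj delta_quiescent (negbTE djNq) mul0r.
Qed.

Lemma vnorm_quiescent : vnorm (delta quiescent) = 1.
Proof. by rewrite (funext delta_quiescent) vnorm_unit_vector. Qed.

Definition delta_norm_prod c :=
  \big[*%R/1]_(i \in [set: int]) vnorm (delta (nbhd N c i)).

Lemma delta_norm_prodE (A : {fset int}) c :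
  (forall i, i \notin A -> nbhd N c i = quiescent) ->
  delta_norm_prod c = \prod_(i <- A) vnorm (delta (nbhd N c i)).
Proof.
by move=> Aq; rewrite /delta_norm_prod (fsbigTE A) // => i /Aq ->; exact: vnorm_quiescent.
Qed.

(* Distributing the product over [A] of the sums [vnorm _ ^+ 2 = \sum_x normc _ ^+ 2]
   enumerates exactly the configurations that agree with [q] outside [A]. *)
Lemma sum_sqr_U_A (A : {fset int}) c :
  (forall i, i \notin A -> nbhd N c i = quiescent) ->
  \sum_(f : {ffun A -> Sigma}) normc (U_A N delta (config_of_ffun q f) c) ^+ 2 =
  delta_norm_prod c ^+ 2.
Proof.
move=> Aq; rewrite (delta_norm_prodE Aq) -prodrXl big_seq_fsetE /=.
under [RHS]eq_bigr do rewrite sqr_vnorm.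
rewrite bigA_distr_bigA /=; apply: eq_bigr => f _.
rewrite (@U_A_prodE A) => [|i iA]; last by split; [exact: Aq | exact: config_of_ffun_out].
rewrite big_seq_fsetE /= (big_morph _ (@Normc.normcM R) (@Normc.normc1 R)) -prodrXl.
by apply: eq_bigr => k _; rewrite config_of_ffun_val.
Qed.

Lemma delta_norm_prod_ge0 c : is_config q c -> 0 <= delta_norm_prod c.
Proof.
move=> c_fin; rewrite (delta_norm_prodE (notin_active_cells c_fin)).
by apply: prodr_ge0 => i _; exact: sqrtr_ge0.
Qed.

Definition basis_vector (c c' : int -> Sigma) : R[i] := if c' == c then 1 else 0.

Lemma fin_vector_basis c : is_config q c -> fin_vector q (basis_vector c).
Proof.
have supp : [set c' | basis_vector c c' != 0] `<=` [set c].
  by move=> c' /=; rewrite /basis_vector; case: (c' =P c) => //; rewrite eqxx.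
by move=> c_fin; split=> [|c' /supp -> //]; apply: sub_finite_set supp (finite_set1 c).
Qed.

Lemma l2sqnorm_basis c : is_config q c -> l2sqnorm q (basis_vector c) = 1%E.
Proof.
move=> c_fin.
rewrite /l2sqnorm -(@esum_widen _ _ [set c]) => [|_ -> //|c' _ /eqP cc'].
  by rewrite esum_set1 /basis_vector ?eqxx ?Normc.normc1 ?expr1n // lee_fin sqr_ge0.
by rewrite /basis_vector (negbTE cc') Normc.normc0 expr0n.
Qed.

Lemma U_apply_basis c d : is_config q c ->
  U_apply q N delta (basis_vector c) d = U_A N delta d c.
Proof.
move=> c_fin; rewrite /U_apply -(fsbig_widen [set c]) => [||c' [_ /eqP cc']].
- by rewrite fsbig_set1 /basis_vector eqxx mulr1.
- by move=> _ ->.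
- by rewrite /= /basis_vector (negbTE cc') mulr0.
Qed.

Lemma l2sqnorm_U_apply_basis c : is_config q c ->
  l2sqnorm q (U_apply q N delta (basis_vector c)) = (delta_norm_prod c ^+ 2)%:E.
Proof.
move=> c_fin; pose A := fset_set (active_cells q N c).
rewrite /l2sqnorm; under eq_esum do rewrite U_apply_basis //.
rewrite -(@esum_widen _ _ (range (@config_of_ffun _ q A))); last 2 first.
- by move=> _ [f _ <-]; exact: config_of_ffun_is_config.
- move=> d d_fin dNrange.
  have [[j [jNact djNq]]|dq] := pselect (exists j, ~ active_cells q N c j /\ d j != q).
    by rewrite (U_A_eq0 c_fin d_fin jNact djNq) Normc.normc0 expr0n.
  case: dNrange; exists [ffun k : A => d (val k)] => //.
  apply: config_of_ffun_restrict => j jNA; apply/eqP/negPn/negP => djNq.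
  by apply: dq; exists j; split=> // /(mem_active_cells c_fin); apply/negP.
rewrite esum_image => [|f g _ _ /config_of_ffun_inj //].
rewrite esum_fset => [||f _]; [|exact: finite_finset|by rewrite lee_fin sqr_ge0].
rewrite fsumEFin; last exact: finite_finset.
by rewrite fsbig_setT_finType (sum_sqr_U_A (notin_active_cells c_fin)).
Qed.

End TimeEvolution.

Section Normalization.
Variables (R : realType) (Sigma : finType) (q : Sigma) (r : nat) (N : r.-tuple int).
Variable delta : r.-tuple Sigma -> Sigma -> R[i].
Hypothesis delta_LQCA : is_LQCA q N delta.
Local Notation quiescent := [tuple of nseq r q].

Let delta_quiescent x : delta quiescent x = if x == q then 1 else 0.
Proof. by case: delta_LQCA => _ _ ->. Qed.

Lemma normalize_delta_quiescent x :
  normalize_delta delta quiescent x = if x == q then 1 else 0.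
Proof. by rewrite /normalize_delta vnorm_quiescent // divr1 delta_quiescent. Qed.

Lemma U_A_normalize c d : is_config q c -> is_config q d ->
  U_A N (normalize_delta delta) d c =
  U_A N delta d c / (delta_norm_prod N delta c)%:C%C.
Proof.
move=> c_fin d_fin.
rewrite (U_A_config N normalize_delta_quiescent) // (U_A_config N delta_quiescent) //.
rewrite (delta_norm_prodE delta_quiescent (A := relevant_cells q N c d)).
  by rewrite /normalize_delta big_split /= prodfV rmorph_prod.
by move=> i /notin_relevant_cells[].
Qed.

Lemma delta_norm_prod_eq1 c : well_formed q N delta -> is_config q c ->
  delta_norm_prod N delta c = 1.
Proof.
move=> wf c_fin; have := wf _ (fin_vector_basis R c_fin).
rewrite (l2sqnorm_U_apply_basis N delta_quiescent) // l2sqnorm_basis // => -[].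
move/eqP; rewrite sqrf_eq1 => /orP[/eqP //|/eqP prod_eqN1].
by have := delta_norm_prod_ge0 N delta_quiescent c_fin; rewrite prod_eqN1 ler0N1.
Qed.

End Normalization.

Theorem mainTheorem6 (R : realType) (Sigma : finType) (q : Sigma) (r : nat)
    (N : r.-tuple int) (delta : r.-tuple Sigma -> Sigma -> R[i]) :
  is_LQCA q N delta -> well_formed q N delta ->
  (forall c d : int -> Sigma, is_config q c -> is_config q d ->
     U_A N (normalize_delta delta) d c = U_A N delta d c) /\
  (forall w : r.-tuple Sigma, vnorm (normalize_delta delta w) = 1).
Proof.
move=> LQCA wf; split=> [c d c_fin d_fin|w].
  by rewrite (U_A_normalize LQCA c_fin d_fin) (delta_norm_prod_eq1 LQCA wf c_fin) divr1.
by apply: vnorm_normalized; case: LQCA.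
Qed.
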